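(* Let $\Omega\subseteq\mathbb{R}^n$ be open, $u:\Omega\to\mathbb{R}^N$ continuous, $x\in\Omega$, $\xi\in\mathbb{S}^{N-1}$, $\eta\in\mathbb{S}^{N-1}$ with $\eta^\top\xi=0$, and $A$ a positive semidefinite symmetric $n\times n$ matrix. If $(P,\mathbf{X})\in J^{2,\xi}u(x)$ and $\big(\eta^\top P,\ \eta^\top\mathbf{X}-\frac12A\big)\in J^{2,+}(\eta^\top u)(x)$, then $(P,\mathbf{X}-\eta\otimes A)\in J^{2,\xi}u(x)$.
   Context: $\mathbf{X}=(\mathbf{X}_{\alpha ij})\in\mathbb{R}^N\otimes\mathbb{R}^{n\times n}_s$ is symmetric in $i,j$; $\mathbf{X}:z\otimes z$ has components $\sum_{ij}\mathbf{X}_{\alpha ij}z_iz_j$; $\eta^\top\mathbf{X}:=(\sum_\alpha\eta_\alpha\mathbf{X}_{\alpha ij})_{ij}$, $\eta^\top P\in\mathbb{R}^{1\times n}$, $\eta\otimes A:=(\eta_\alpha A_{ij})$. For $a,b\in\mathbb{R}^N$, $a\vee b:=\frac12(a\otimes b+b\otimes a)$; matrix inequalities in the sense of quadratic forms. Second contact jet: $J^{2,\xi}u(x)$ is the set of $(P,\mathbf{X})\in\mathbb{R}^{N\times n}\times(\mathbb{R}^N\otimes\mathbb{R}^{n\times n}_s)$ for which there is a continuous $T:\mathbb{R}^n\setminus\{0\}\to\mathbb{R}^{N\times N}_s$ with $|T(y)|\to0$ as $y\to0$ and $\xi\vee[u(z)-u(x)-P(z-x)-\frac12\mathbf{X}:(z-x)\otimes(z-x)]\le|z-x|^2T(z-x)$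 for $z\ne x$ near $x$. Scalar second superjet: for $v:\Omega\to\mathbb{R}$, $J^{2,+}v(x)$ is the set of $(p,Y)\in\mathbb{R}^{1\times n}\times\mathbb{R}^{n\times n}_s$ with $v(z)\le v(x)+p(z-x)+\frac12Y:(z-x)\otimes(z-x)+o(|z-x|^2)$ as $z\to x$. *)

From HB Require Import structures.
From mathcomp Require Import all_boot all_order all_algebra.
From mathcomp Require Import all_classical all_reals all_analysis.
Set Implicit Arguments. Unset Strict Implicit. Unset Printing Implicit Defensive.
Import Order.TTheory GRing.Theory Num.Theory.
Import numFieldNormedType.Exports.
Local Open Scope classical_set_scope.
Local Open Scope ring_scope.

Section Defs.
Variable R : realType.

Definition enorm (k : nat) (v : 'cV[R]_k) : R := Num.sqrt (\sum_i (v i 0) ^+ 2).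

Definition dotc (k : nat) (a b : 'cV[R]_k) : R := \sum_i a i 0 * b i 0.

Definition symmx (k : nat) (A : 'M[R]_k) : Prop := A^T = A.

Definition mxle (k : nat) (A B : 'M[R]_k) : Prop :=
  forall v : 'cV[R]_k, (v^T *m A *m v) 0 0 <= (v^T *m B *m v) 0 0.

Definition psd (k : nat) (A : 'M[R]_k) : Prop := symmx A /\ mxle 0 A.

Definition symprod (k : nat) (a b : 'cV[R]_k) : 'M[R]_k :=
  2^-1 *: (a *m b^T + b *m a^T).

(* X : z (x) z, with X : 'I_N -> 'M_n (a tensor in R^N (x) R^{nxn}_s) *)
Definition tcontr (N n : nat) (X : 'I_N -> 'M[R]_n) (z : 'cV[R]_n) : 'cV[R]_N :=
  \col_a (z^T *m X a *m z) 0 0.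

Definition tdot (N n : nat) (eta : 'cV[R]_N) (X : 'I_N -> 'M[R]_n) : 'M[R]_n :=
  \sum_a eta a 0 *: X a.

Definition ttens (N n : nat) (eta : 'cV[R]_N) (A : 'M[R]_n) : 'I_N -> 'M[R]_n :=
  fun a => eta a 0 *: A.

Definition contact_jet2 (N n : nat) (Omega : set 'cV[R]_n)
    (u : 'cV[R]_n -> 'cV[R]_N) (xi : 'cV[R]_N) (x : 'cV[R]_n)
    (P : 'M[R]_(N, n)) (X : 'I_N -> 'M[R]_n) : Prop :=
  (forall a, symmx (X a)) /\
  exists T : 'cV[R]_n -> 'M[R]_N,
    {within ~` [set 0], continuous T} /\
    (forall y, y != 0 -> symmx (T y)) /\
    (T y @[y --> (0 : 'cV[R]_n)^'] --> (0 : 'M[R]_N)) /\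
    exists delta : R, 0 < delta /\
      forall z, Omega z -> z != x -> enorm (z - x) < delta ->
        mxle (symprod xi (u z - u x - P *m (z - x) - 2^-1 *: tcontr X (z - x)))
             (enorm (z - x) ^+ 2 *: T (z - x)).

Definition superjet2 (n : nat) (Omega : set 'cV[R]_n) (v : 'cV[R]_n -> R)
    (x : 'cV[R]_n) (p : 'rV[R]_n) (Y : 'M[R]_n) : Prop :=
  symmx Y /\
  forall eps : R, 0 < eps -> exists delta : R, 0 < delta /\
    forall z, Omega z -> enorm (z - x) < delta ->
      v z - (v x + (p *m (z - x)) 0 0 + 2^-1 * ((z - x)^T *m Y *m (z - x)) 0 0)
        <= eps * enorm (z - x) ^+ 2.

End Defs.

From mathcomp Require Import all_boot all_order all_algebra.
From mathcomp Require Import all_classical all_reals all_analysis.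
From mathcomp Require Import ring lra.
Import Order.TTheory GRing.Theory Num.Theory.
Import numFieldNormedType.Exports.
Local Open Scope classical_set_scope.
Local Open Scope ring_scope.

(* Write h = z - x, w for the second-order remainder u z - u x - P h - X : h (x) h / 2 and
   q = h^T A h >= 0; replacing X by X - eta (x) A turns w into w + (q / 2) eta.  As xi is
   orthogonal to eta, the contact inequality tested on v + t eta gives, for every real t,
     (xi.v) (w.v + t eta.w) <= |h|^2 N |T h| |v + t eta|^2,
   while the superjet hypothesis says eta.w + q / 4 <= o(|h|^2).  Taking t = -2 eta.v or t = 0
   according to the sign of (xi.v) (eta.v), and Bessel's inequality, give the contact inequality
   for w + (q / 2) eta with the weight (N |T h| + sigma h) I, where sigma is a continuous
   modulus for the o(|h|^2) term. *)

Section ContactJets.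
Set Implicit Arguments.
Unset Strict Implicit.
Unset Printing Implicit Defensive.
Variable R : realType.

Section EuclideanAlgebra.
Implicit Types (k : nat).

Lemma dotcE k (a b : 'cV[R]_k) : dotc a b = (a^T *m b) 0 0.
Proof. by rewrite mxE; apply: eq_bigr => i _; rewrite mxE. Qed.

Lemma dotcC k (a b : 'cV[R]_k) : dotc a b = dotc b a.
Proof. by apply: eq_bigr => i _; rewrite mulrC. Qed.

Lemma dotcDl k (a b c : 'cV[R]_k) : dotc (a + b) c = dotc a c + dotc b c.
Proof. by rewrite /dotc -big_split; apply: eq_bigr => i _; rewrite !mxE mulrDl. Qed.

Lemma dotcNl k (a c : 'cV[R]_k) : dotc (- a) c = - dotc a c.
Proof. by rewrite /dotc -sumrN; apply: eq_bigr => i _; rewrite !mxE mulNr. Qed.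

Lemma dotcBl k (a b c : 'cV[R]_k) : dotc (a - b) c = dotc a c - dotc b c.
Proof. by rewrite dotcDl dotcNl. Qed.

Lemma dotcZl k s (a c : 'cV[R]_k) : dotc (s *: a) c = s * dotc a c.
Proof. by rewrite /dotc mulr_sumr; apply: eq_bigr => i _; rewrite !mxE mulrA. Qed.

Lemma dotcDr k (a b c : 'cV[R]_k) : dotc c (a + b) = dotc c a + dotc c b.
Proof. by rewrite dotcC dotcDl !(dotcC c). Qed.

Lemma dotcBr k (a b c : 'cV[R]_k) : dotc c (a - b) = dotc c a - dotc c b.
Proof. by rewrite dotcC dotcBl !(dotcC c). Qed.

Lemma dotcZr k s (a c : 'cV[R]_k) : dotc c (s *: a) = s * dotc c a.
Proof. by rewrite dotcC dotcZl (dotcC c). Qed.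

Lemma dotcc_ge0 k (a : 'cV[R]_k) : 0 <= dotc a a.
Proof. by apply: sumr_ge0 => i _; rewrite -expr2 sqr_ge0. Qed.

Lemma enorm_sqr k (a : 'cV[R]_k) : enorm a ^+ 2 = dotc a a.
Proof.
rewrite /enorm sqr_sqrtr; last by apply: sumr_ge0 => i _; rewrite sqr_ge0.
by apply: eq_bigr => i _; rewrite expr2.
Qed.

Lemma enorm_ge0 k (a : 'cV[R]_k) : 0 <= enorm a.
Proof. exact: sqrtr_ge0. Qed.

Lemma enorm_gt0 k (a : 'cV[R]_k) : (0 < enorm a) = (a != 0).
Proof.
rewrite sqrtr_gt0 lt_def sumr_ge0 ?andbT => [|i _]; last exact: sqr_ge0.
rewrite psumr_eq0 => [|i _]; last exact: sqr_ge0.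
congr negb; apply/allP/eqP => [a0|]; last by move=> -> i _; rewrite mxE sqrf_eq0 eqxx.
apply/matrixP => i j; rewrite (ord1 j) mxE; apply/eqP.
by rewrite -sqrf_eq0; have := a0 i (mem_index_enum i).
Qed.

Lemma enorm0 k : enorm (0 : 'cV[R]_k) = 0.
Proof. by rewrite /enorm big1 ?sqrtr0 // => i _; rewrite mxE expr2 mulr0. Qed.

Lemma enormZ k s (a : 'cV[R]_k) : enorm (s *: a) = `|s| * enorm a.
Proof.
rewrite /enorm -sqrtr_sqr -sqrtrM ?sqr_ge0 // mulr_sumr.
by congr Num.sqrt; apply: eq_bigr => i _; rewrite mxE exprMn.
Qed.

Lemma enorm_coord k (a : 'cV[R]_k) i : `|a i 0| <= enorm a.
Proof.
rewrite /enorm -sqrtr_sqr; apply: ler_wsqrtr.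
by rewrite (bigD1 i) //= lerDl; apply: sumr_ge0 => j _; exact: sqr_ge0.
Qed.

Lemma bessel_ineq k (v xi eta : 'cV[R]_k) :
  dotc xi xi = 1 -> dotc eta eta = 1 -> dotc eta xi = 0 ->
  dotc xi v ^+ 2 + dotc eta v ^+ 2 <= dotc v v.
Proof.
move=> xi1 eta1 eta_xi.
have := dotcc_ge0 (v - dotc xi v *: xi - dotc eta v *: eta).
rewrite !(dotcBl, dotcBr, dotcZl, dotcZr).
rewrite (dotcC v xi) (dotcC v eta) (dotcC xi eta) xi1 eta1 eta_xi.
by move=> ?; nra.
Qed.

End EuclideanAlgebra.

Section QuadraticForms.
Implicit Types (k : nat).

Lemma qform_sum k (v : 'cV[R]_k) (M : 'M[R]_k) :
  (v^T *m M *m v) 0 0 = \sum_i \sum_j v i 0 * M i j * v j 0.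
Proof.
rewrite mxE; under eq_bigr => j _ do rewrite mxE mulr_suml.
by rewrite exchange_big; apply: eq_bigr => i _; apply: eq_bigr => j _; rewrite !mxE.
Qed.

Lemma qformB k (v : 'cV[R]_k) (M1 M2 : 'M[R]_k) :
  (v^T *m (M1 - M2) *m v) 0 0 = (v^T *m M1 *m v) 0 0 - (v^T *m M2 *m v) 0 0.
Proof. by rewrite mulmxBr mulmxBl [LHS]mxE [X in _ + X]mxE. Qed.

Lemma qformZ k s (v : 'cV[R]_k) (M : 'M[R]_k) :
  (v^T *m (s *: M) *m v) 0 0 = s * (v^T *m M *m v) 0 0.
Proof. by rewrite -scalemxAr -scalemxAl mxE. Qed.

Lemma qform1 k (v : 'cV[R]_k) : (v^T *m 1%:M *m v) 0 0 = dotc v v.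
Proof. by rewrite mulmx1 dotcE. Qed.

Lemma qform_symprod k (v a b : 'cV[R]_k) :
  (v^T *m symprod a b *m v) 0 0 = dotc a v * dotc b v.
Proof.
rewrite /symprod qformZ mulmxDr mulmxDl mxE.
have dyad (c d : 'cV[R]_k) : (v^T *m (c *m d^T) *m v) 0 0 = dotc c v * dotc d v.
  rewrite mulmxA -(mulmxA (v^T *m c)) mxE big_ord1 (dotcC c) !dotcE.
  by rewrite -[v^T *m c]trmxK trmx_mul trmxK mxE.
by rewrite !dyad; field.
Qed.

Lemma mx_coord_le_norm k l (M : 'M[R]_(k, l)) i j : `|M i j| <= `|M|.
Proof.
rewrite [leRHS]/Num.norm /= mx_normrE; apply/bigmax_geP; right => /=.
by exists (i, j).
Qed.

Lemma qform_le_norm k (v : 'cV[R]_k) (M : 'M[R]_k) :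
  (v^T *m M *m v) 0 0 <= k%:R * `|M| * dotc v v.
Proof.
have termwise i j : v i 0 * M i j * v j 0 <= `|M| / 2 * (v i 0 ^+ 2 + v j 0 ^+ 2).
  have le_norm : v i 0 * M i j * v j 0 <= `|v i 0| * `|M| * `|v j 0|.
    rewrite (le_trans (ler_norm _)) // !normrM ler_wpM2r //.
    by rewrite ler_wpM2l // mx_coord_le_norm.
  rewrite (le_trans le_norm) //.
  rewrite -[v i 0 ^+ 2]real_normK ?num_real // -[v j 0 ^+ 2]real_normK ?num_real //.
  rewrite -subr_ge0.
  have -> : `|M| / 2 * (`|v i 0| ^+ 2 + `|v j 0| ^+ 2) - `|v i 0| * `|M| * `|v j 0| =
      `|M| * (`|v i 0| - `|v j 0|) ^+ 2 / 2 by field.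
  by rewrite divr_ge0 // mulr_ge0 // sqr_ge0.
rewrite qform_sum.
suff <- : \sum_i \sum_(j < k) `|M| / 2 * (v i 0 ^+ 2 + v j 0 ^+ 2) = k%:R * `|M| * dotc v v.
  by apply: ler_sum => i _; apply: ler_sum => j _; exact: termwise.
under eq_bigr => i _ do rewrite -mulr_sumr big_split /= sumr_const card_ord.
rewrite -mulr_sumr big_split /= sumr_const card_ord sumrMnl /dotc.
under [in RHS]eq_bigr => i _ do rewrite -expr2.
set S := \sum_(i < k) _.
by rewrite -[S *+ k]mulr_natr; field.
Qed.

End QuadraticForms.

Section Tensors.
Variables (N n : nat).

Lemma tcontrB_ttens (X : 'I_N -> 'M[R]_n) (eta : 'cV[R]_N) A h :
  tcontr (fun a => X a - ttens eta A a) h = tcontr X h - (h^T *m A *m h) 0 0 *: eta.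
Proof.
apply/matrixP => i j; rewrite (ord1 j) [LHS]mxE /ttens qformB qformZ.
by rewrite !mxE mulrC.
Qed.

Lemma dotc_tcontr (X : 'I_N -> 'M[R]_n) (eta : 'cV[R]_N) h :
  dotc eta (tcontr X h) = (h^T *m tdot eta X *m h) 0 0.
Proof.
rewrite /tdot mulmx_sumr mulmx_suml summxE; apply: eq_bigr => a _.
by rewrite qformZ mxE.
Qed.

Lemma dotc_mulmx (eta : 'cV[R]_N) (P : 'M[R]_(N, n)) h :
  dotc eta (P *m h) = (eta^T *m P *m h) 0 0.
Proof. by rewrite dotcE mulmxA. Qed.

Lemma dotc_taylor2_remainder (eta a b : 'cV[R]_N)
    (P : 'M[R]_(N, n)) (X : 'I_N -> 'M[R]_n) (A : 'M[R]_n) (h : 'cV[R]_n) :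
  dotc eta a - (dotc eta b + (eta^T *m P *m h) 0 0
                + 2^-1 * (h^T *m (tdot eta X - 2^-1 *: A) *m h) 0 0) =
  dotc eta (a - b - P *m h - 2^-1 *: tcontr X h) + (h^T *m A *m h) 0 0 / 4.
Proof.
rewrite !(dotcBr, dotcZr) dotc_tcontr dotc_mulmx qformB qformZ.
by field.
Qed.

End Tensors.

(* Use the hypothesis at t = -2b when ab >= 0 and at t = 0 otherwise. *)
Lemma shifted_product_le (a b m V e d q g : R) :
  0 <= e -> 0 <= d -> 0 <= q -> g + q / 4 <= d -> a ^+ 2 + b ^+ 2 <= V ->
  (forall t, a * (m + t * g) <= e * (V + 2 * t * b + t ^+ 2)) ->
  a * (m + q / 2 * b) <= (e + d) * V.
Proof.
move=> e0 d0 q0 gd abV shift.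
have V0 : 0 <= V by apply: le_trans abV; nra.
have [ab0|ab0] := lerP 0 (a * b).
  have := shift (- 2 * b).
  have -> : V + 2 * (- 2 * b) * b + (- 2 * b) ^+ 2 = V by ring.
  have : a * b * g <= a * b * (d - q / 4) by rewrite ler_wpM2l // lerBrDr.
  have : 0 <= d * (V - 2 * a * b) by rewrite mulr_ge0 //; have := sqr_ge0 (a - b); nra.
  by nra.
have := shift 0.
have -> : V + 2 * 0 * b + 0 ^+ 2 = V by ring.
have : 0 <= d * V by rewrite mulr_ge0.
by nra.
Qed.

Section ContactShift.
Variables (N : nat) (xi eta : 'cV[R]_N).
Hypotheses (xi1 : dotc xi xi = 1) (eta1 : dotc eta eta = 1) (eta_xi : dotc eta xi = 0).

Lemma symprod_shift_le (w : 'cV[R]_N) (M : 'M[R]_N) (c s q : R) :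
  0 <= c -> 0 <= s -> 0 <= q -> dotc eta w + q / 4 <= c * s ->
  mxle (symprod xi w) (c *: M) ->
  mxle (symprod xi (w + (q / 2) *: eta)) (c *: ((N%:R * `|M| + s) *: 1%:M)).
Proof.
move=> c0 s0 q0 gs le_w v.
rewrite qform_symprod !qformZ qform1 dotcDl dotcZl.
have shift t : dotc xi v * (dotc w v + t * dotc eta w) <=
    c * (N%:R * `|M|) * (dotc v v + 2 * t * dotc eta v + t ^+ 2).
  have := le_w (v + t *: eta); rewrite qform_symprod qformZ.
  rewrite !(dotcDr, dotcZr) (dotcC xi eta) eta_xi mulr0 addr0 (dotcC w eta) => le_wt.
  apply: (le_trans le_wt); rewrite -mulrA ler_wpM2l //.
  have -> : dotc v v + 2 * t * dotc eta v + t ^+ 2 = dotc (v + t *: eta) (v + t *: eta).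
    by rewrite !(dotcDr, dotcDl, dotcZr, dotcZl) (dotcC v eta) eta1; ring.
  exact: qform_le_norm.
have e0 : 0 <= c * (N%:R * `|M|) by rewrite !mulr_ge0.
rewrite mulrA [c * (_ + _)]mulrDr.
exact: shifted_product_le e0 (mulr_ge0 c0 s0) q0 gs (bessel_ineq v xi1 eta1 eta_xi) shift.
Qed.

End ContactShift.

Section Continuity.
Implicit Types (k : nat).

Lemma continuous_sum_at (T : topologicalType) (I : finType) (f : I -> T -> R) t :
  (forall i, {for t, continuous (f i)}) -> {for t, continuous (fun s => \sum_i f i s)}.
Proof. by move=> cf; apply: cvg_big => // [|i _]; [exact: add_continuous | exact: cf]. Qed.

Lemma coord_continuous_at (T : topologicalType) p q (f : T -> 'M[R]_(p, q)) t i j :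
  {for t, continuous f} -> {for t, continuous (fun s => f s i j)}.
Proof.
move=> cf; apply: (@continuous_comp _ _ _ f (fun M : 'M[R]_(p, q) => M i j)) => //.
exact: coord_continuous.
Qed.

Lemma enorm_continuous k : continuous (@enorm R k).
Proof.
move=> y; apply: (@continuous_comp _ _ _ (fun y : 'cV[R]_k => \sum_i y i 0 ^+ 2) Num.sqrt).
  apply: continuous_sum_at => i.
  apply: (@continuous_comp _ _ _ (fun M : 'cV[R]_k => M i 0) (fun r : R => r ^+ 2)).
    exact: coord_continuous.
  exact: exprn_continuous.
exact: sqrt_continuous.
Qed.

Lemma qform_continuous k (M : 'M[R]_k) : continuous (fun y : 'cV[R]_k => (y^T *m M *m y) 0 0).
Proof.
rewrite (_ : (fun y : 'cV[R]_k => _) =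
  (fun y : 'cV[R]_k => \sum_i \sum_j y i 0 * M i j * y j 0)) => [y|].
  apply: continuous_sum_at => i; apply: continuous_sum_at => j.
  apply: continuousM; last exact: coord_continuous_at.
  by apply: continuousM; [exact: coord_continuous_at | exact: cst_continuous].
by apply/funext => y; rewrite qform_sum.
Qed.

Lemma mulmx_coord_continuous p k (M : 'M[R]_(p, k)) i :
  continuous (fun y : 'cV[R]_k => (M *m y) i 0).
Proof.
rewrite (_ : (fun y : 'cV[R]_k => _) = (fun y : 'cV[R]_k => \sum_j M i j * y j 0)) => [y|].
  apply: continuous_sum_at => j.
  by apply: continuousM; [exact: cst_continuous | exact: coord_continuous_at].
by apply/funext => y; rewrite mxE.
Qed.

Lemma dotc_continuous_at (T : topologicalType) k (a : 'cV[R]_k) (f : T -> 'cV[R]_k) t :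
  {for t, continuous f} -> {for t, continuous (fun s => dotc a (f s))}.
Proof.
move=> cf; apply: continuous_sum_at => i.
by apply: continuousM; [exact: cst_continuous | exact: coord_continuous_at].
Qed.

Lemma open_enorm_ball n (Omega : set 'cV[R]_n) x :
  open Omega -> Omega x -> exists2 r : R, 0 < r & forall k : 'cV[R]_n, enorm k <= r -> Omega (x + k).
Proof.
move=> oO Ox; have /nbhs_ballP[e e0 ballO] : nbhs x Omega by exact: open_nbhs_nbhs.
exists (e / 2); first by rewrite divr_gt0.
move=> k ke; apply: ballO; split => // i j; rewrite (ord1 j) /ball /= mxE opprD addNKr normrN.
apply: le_lt_trans (enorm_coord k i) (le_lt_trans ke _).
by rewrite ltr_pdivrMr // ltr_pMr // ltr1n.
Qed.

End Continuity.

Section SqrModulus.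
Variables (n : nat) (r : R).
Hypothesis r_gt0 : 0 < r.

Definition retract_ball (k : 'cV[R]_n) := Num.min 1 (r / enorm k) *: k.

Lemma retract_ball_id k : enorm k <= r -> retract_ball k = k.
Proof.
have [->|k0 kr] := eqVneq k 0; first by rewrite /retract_ball scaler0.
rewrite /retract_ball (_ : Num.min 1 _ = 1) ?scale1r //.
by apply/min_idPl; rewrite ler_pdivlMr ?enorm_gt0 // mul1r.
Qed.

Lemma retract_ball_eq0 k : (retract_ball k == 0) = (k == 0).
Proof.
have [->|k0] := eqVneq k 0; first by rewrite /retract_ball scaler0 eqxx.
by rewrite scaler_eq0 (negbTE k0) orbF gt_eqF // lt_min ltr01 divr_gt0 ?enorm_gt0.
Qed.

Lemma enorm_retract_ball k : enorm (retract_ball k) <= r.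
Proof.
have [->|k0] := eqVneq k 0; first by rewrite /retract_ball scaler0 enorm0 ltW.
rewrite /retract_ball enormZ ger0_norm; last by rewrite le_min ler01 divr_ge0 ?enorm_ge0 ?ltW.
by rewrite -ler_pdivlMr ?enorm_gt0 // ge_min lexx orbT.
Qed.

Lemma retract_ball_continuous k : k != 0 -> {for k, continuous retract_ball}.
Proof.
move=> k0; apply: continuousZ; last exact: cvg_id.
apply: continuous_min; first exact: cst_continuous.
apply: continuousM; first exact: cst_continuous.
by apply: continuousV; [rewrite gt_eqF ?enorm_gt0 | exact: enorm_continuous].
Qed.

Variable f : 'cV[R]_n -> R.

(* Through retract_ball, f is only evaluated on the closed ball, where it is assumed continuous. *)
Definition sqr_modulus k := Num.max (f (retract_ball k) / enorm (retract_ball k) ^+ 2) 0.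

Lemma sqr_modulus_ge0 k : 0 <= sqr_modulus k.
Proof. by rewrite le_max lexx orbT. Qed.

Lemma le_sqr_modulus k : k != 0 -> enorm k <= r -> f k <= sqr_modulus k * enorm k ^+ 2.
Proof.
move=> k0 kr; rewrite -ler_pdivrMr ?exprn_gt0 ?enorm_gt0 //.
by rewrite /sqr_modulus retract_ball_id // le_max lexx.
Qed.

Lemma sqr_modulus_continuous :
  (forall k, k != 0 -> enorm k <= r -> {for k, continuous f}) ->
  forall k, k != 0 -> {for k, continuous sqr_modulus}.
Proof.
move=> f_cont k k0; have rk0 : retract_ball k != 0 by rewrite retract_ball_eq0.
apply: (@continuous_max _ _ ((fun y => f y / enorm y ^+ 2) \o retract_ball) (fun=> 0)).
  apply: continuous_comp; first exact: retract_ball_continuous.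
  apply: continuousM; first by apply: f_cont => //; exact: enorm_retract_ball.
  apply: continuousV; first by rewrite expf_neq0 // gt_eqF ?enorm_gt0.
  by apply: continuousM; exact: enorm_continuous.
exact: cst_continuous.
Qed.

Lemma sqr_modulus_cvg0 :
  (forall eps, 0 < eps -> exists2 delta, 0 < delta &
     forall k, enorm k < delta -> enorm k <= r -> f k <= eps * enorm k ^+ 2) ->
  sqr_modulus k @[k --> (0 : 'cV[R]_n)^'] --> 0.
Proof.
move=> f_small; apply/cvgrPdist_le => eps eps0.
have [delta delta0 f_le] := f_small eps eps0.
near=> k.
have k0 : k != 0 by near: k; exact: nbhs_dnbhs_neq.
have /andP[kd kr] : (enorm k < delta) && (enorm k < r).
  rewrite -lt_min; near: k; apply: nbhs_dnbhs.
  by apply: (cvgr_lt _ (@enorm_continuous n 0)); rewrite enorm0 lt_min delta0 r_gt0.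
rewrite sub0r normrN ger0_norm ?sqr_modulus_ge0 // /sqr_modulus retract_ball_id; last exact: ltW.
rewrite ge_max (ltW eps0) andbT ler_pdivrMr ?exprn_gt0 ?enorm_gt0 //.
exact/f_le/ltW.
Unshelve. all: by end_near. Qed.

End SqrModulus.

Section IsotropicWeight.
Variables (n N : nat) (T : 'cV[R]_n -> 'M[R]_N) (s : 'cV[R]_n -> R).

Definition isotropic_weight k := (N%:R * `|T k| + s k) *: (1%:M : 'M[R]_N).

Lemma isotropic_weight_sym k : symmx (isotropic_weight k).
Proof. by rewrite /symmx /isotropic_weight linearZ /= trmx1. Qed.

Lemma isotropic_weight_continuous :
  {within ~` [set 0], continuous T} -> (forall k, k != 0 -> {for k, continuous s}) ->
  {within ~` [set 0], continuous isotropic_weight}.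
Proof.
have open_ne0 : open (~` [set (0 : 'cV[R]_n)]).
  by rewrite openC; apply/accessible_closed_set1/hausdorff_accessible/norm_hausdorff.
rewrite !continuous_open_subspace // => T_cont s_cont k /set_mem /eqP k0.
apply: (continuousZr_tmp (s := fun k => N%:R * `|T k| + s k)).
apply: continuousD; last exact: s_cont.
apply: continuousM; first exact: cst_continuous.
apply: (@continuous_comp _ _ _ T (fun M : 'M[R]_N => `|M|)); last exact: norm_continuous.
by apply: T_cont; apply/mem_set/eqP.
Qed.

Lemma isotropic_weight_cvg0 :
  T k @[k --> (0 : 'cV[R]_n)^'] --> (0 : 'M[R]_N) -> s k @[k --> (0 : 'cV[R]_n)^'] --> 0 ->
  isotropic_weight k @[k --> (0 : 'cV[R]_n)^'] --> (0 : 'M[R]_N).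
Proof.
move=> T_cvg0 s_cvg0; rewrite -(scale0r (1%:M : 'M[R]_N)); apply: cvgZr_tmp.
rewrite -[0 : R]addr0; apply: cvgD => //.
rewrite -(mulr0 N%:R); apply: cvgM; first exact: cvg_cst.
by rewrite -(@normr0 _ 'M[R]_N); exact: cvg_norm.
Qed.

End IsotropicWeight.

Lemma contact_jet2_shift (n N : nat) (Omega : set 'cV[R]_n)
    (u : 'cV[R]_n -> 'cV[R]_N) (x : 'cV[R]_n) (xi eta : 'cV[R]_N)
    (A : 'M[R]_n) (P : 'M[R]_(N, n)) (X : 'I_N -> 'M[R]_n) (s : 'cV[R]_n -> R) (r : R) :
  dotc xi xi = 1 -> dotc eta eta = 1 -> dotc eta xi = 0 -> psd A ->
  (forall k, k != 0 -> {for k, continuous s}) -> (forall k, 0 <= s k) ->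
  s k @[k --> (0 : 'cV[R]_n)^'] --> 0 -> 0 < r ->
  (forall z, Omega z -> z != x -> enorm (z - x) <= r ->
     dotc eta (u z - u x - P *m (z - x) - 2^-1 *: tcontr X (z - x))
       + ((z - x)^T *m A *m (z - x)) 0 0 / 4 <= s (z - x) * enorm (z - x) ^+ 2) ->
  contact_jet2 Omega u xi x P X ->
  contact_jet2 Omega u xi x P (fun a => X a - ttens eta A a).
Proof.
move=> xi1 eta1 eta_xi [symA psdA] s_cont s_ge0 s_cvg0 r0 eta_bound.
move=> [symX [T [T_cont [symT [T_cvg0 [delta [delta0 le_T]]]]]]].
split=> [a|]; first by rewrite /symmx /ttens linearB /= linearZ /= symA symX.
exists (isotropic_weight T s); split; first exact: isotropic_weight_continuous.
split; first by move=> k _; exact: isotropic_weight_sym.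
split; first exact: isotropic_weight_cvg0.
exists (Num.min delta r); split; first by rewrite lt_min delta0 r0.
move=> z Oz zx; rewrite lt_min => /andP[z_delta z_r].
set h := z - x; set q := (h^T *m A *m h) 0 0.
have q0 : 0 <= q by have := psdA h; rewrite mulmx0 mul0mx mxE.
set w := u z - u x - P *m h - 2^-1 *: tcontr X h.
have -> : u z - u x - P *m h - 2^-1 *: tcontr (fun a => X a - ttens eta A a) h =
    w + (q / 2) *: eta.
  by rewrite tcontrB_ttens -/q; apply/matrixP => i j; rewrite !mxE; ring.
apply: symprod_shift_le => //; first exact: sqr_ge0.
  by rewrite (mulrC (enorm h ^+ 2)); apply: eta_bound => //; exact: ltW.
exact: le_T.
Qed.

End ContactJets.

Theorem lemma33 (R : realType) (n N : nat) (Omega : set 'cV[R]_n)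
    (u : 'cV[R]_n -> 'cV[R]_N) (x : 'cV[R]_n) (xi eta : 'cV[R]_N)
    (A : 'M[R]_n) (P : 'M[R]_(N, n)) (X : 'I_N -> 'M[R]_n) :
  open Omega ->
  {within Omega, continuous u} ->
  Omega x ->
  enorm xi = 1 -> enorm eta = 1 -> dotc eta xi = 0 ->
  psd A ->
  contact_jet2 Omega u xi x P X ->
  superjet2 Omega (fun z => dotc eta (u z)) x (eta^T *m P)
    (tdot eta X - 2^-1 *: A) ->
  contact_jet2 Omega u xi x P (fun a => X a - ttens eta A a).
Proof.
move=> oO u_cont Ox xi1 eta1 eta_xi psdA jet [_ super].
rewrite (continuous_open_subspace u oO) in u_cont.
have [r r0 ballO] := open_enorm_ball oO Ox.
pose D k := dotc eta (u (x + k)) - (dotc eta (u x) + (eta^T *m P *m k) 0 0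
  + 2^-1 * (k^T *m (tdot eta X - 2^-1 *: A) *m k) 0 0).
have D_cont k : k != 0 -> enorm k <= r -> {for k, continuous D}.
  move=> _ kr; apply: continuousB.
    apply: dotc_continuous_at; apply: (@continuous_comp _ _ _ (fun k => x + k) u).
      by apply: continuousD; [exact: cst_continuous | exact: cvg_id].
    exact: u_cont (mem_set (ballO k kr)).
  apply: continuousD; first apply: continuousD.
  - exact: cst_continuous.
  - exact: mulmx_coord_continuous.
  - by apply: continuousM; [exact: cst_continuous | exact: qform_continuous].
have D_small eps : 0 < eps -> exists2 delta, 0 < delta &
    forall k, enorm k < delta -> enorm k <= r -> D k <= eps * enorm k ^+ 2.
  move=> eps0; have [delta [delta0 le_D]] := super eps eps0.
  exists delta => // k kd kr; have := le_D _ (ballO k kr).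
  have -> : x + k - x = k by rewrite addrAC subrr add0r.
  by apply.
apply: (contact_jet2_shift (s := sqr_modulus r D) _ _ eta_xi psdA _ _ _ r0 _ jet).
- by rewrite -enorm_sqr xi1 expr1n.
- by rewrite -enorm_sqr eta1 expr1n.
- exact: (sqr_modulus_continuous r0 D_cont).
- exact: sqr_modulus_ge0.
- exact: sqr_modulus_cvg0.
move=> z Oz zx zr; rewrite -dotc_taylor2_remainder.
have := le_sqr_modulus D (_ : z - x != 0) zr.
by rewrite /D [x + _]addrC subrK; apply; rewrite subr_eq0.
Qed.
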